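(* Let $(X,*,0)$ be a KU-algebra, let $d: X \to X$ be a self map, let $\beta: X \to [0,1]$ be a fuzzy subset of $X$, and let $\mu_\beta: X \times X \to [0,1]$ be given by $\mu_\beta(x,y) = \min\{\beta(x), \beta(y)\}$. Then $\beta$ is a fuzzy left derivations KU-ideal of $X$ (with respect to $d$) if and only if $\mu_\beta$ is a fuzzy left derivations KU-ideal of the KU-algebra $X \times X$ (with respect to the self map $D(x,y) = (d(x), d(y))$).
   Context: A KU-algebra is a set $X$ with a binary operation $*$ and a constant $0$ such that for all $x,y,z \in X$: (KU1) $(x*y)*[(y*z)*(x*z)] = 0$; (KU2) $x*0 = 0$; (KU3) $0*x = x$; (KU4) $x*y = 0 = y*x$ implies $x = y$. The product $X \times X$ is a KU-algebra with operation $(x,y)*(u,v) = (x*u, y*v)$ and constant $(0,0)$. Given a KU-algebra $Y$ with constant $0_Y$ and a self map $D: Y \to Y$, a fuzzy set $\nu: Y \to [0,1]$ is a fuzzy left derivations KU-ideal of $Y$ if (F1) $\nu(0_Y) \ge \nu(a)$ for all $a \in Y$, and (FL2) $\nu(D(a*c)) \ge \min\{\nu(D(a)*(b*c)), \nu(D(b))\}$ for all $a,b,c \in Y$. The function $\mu_\beta$ is called the strongest fuzzy relation on $X$ associated with $\beta$; the paper writes $d(x,y)$ for the self map of $X\times X$ induced by $d$, i.e. $(d(x),d(y))$. *)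

From Stdlib Require Import Reals.
Open Scope R_scope.

Record is_KU_algebra (X : Type) (op : X -> X -> X) (z : X) : Prop := {
  KU1 : forall x y w, op (op x y) (op (op y w) (op x w)) = z;
  KU2 : forall x, op x z = z;
  KU3 : forall x, op z x = x;
  KU4 : forall x y, op x y = z -> op y x = z -> x = y
}.

Definition prod_op {X : Type} (op : X -> X -> X) (p q : X * X) : X * X :=
  (op (fst p) (fst q), op (snd p) (snd q)).

Definition prod_map {X : Type} (d : X -> X) (p : X * X) : X * X :=
  (d (fst p), d (snd p)).

Definition fuzzy_set {Y : Type} (nu : Y -> R) : Prop :=
  forall a, 0 <= nu a <= 1.

Definition fuzzy_left_der_KU_ideal {Y : Type} (op : Y -> Y -> Y) (z : Y)
  (D : Y -> Y) (nu : Y -> R) : Prop :=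
  (forall a, nu z >= nu a) /\
  (forall a b c, nu (D (op a c)) >= Rmin (nu (op (D a) (op b c))) (nu (D b))).

Definition mu_beta {X : Type} (beta : X -> R) (p : X * X) : R :=
  Rmin (beta (fst p)) (beta (snd p)).

From Stdlib Require Import Reals Lra.
Open Scope R_scope.

(* Both axioms are monotone in the fuzzy values, and [Rmin] of two inequalities is
   again an inequality, so they pass from [beta] to the product componentwise;
   conversely, restricting [mu_beta] to the diagonal [(x, x)] gives back [beta]
   because [Rmin r r = r].  Neither the KU-algebra axioms nor the bound
   [0 <= beta <= 1] play a role. *)

Lemma Rmin_ge_compat (a b c e : R) :
  a >= c -> b >= e -> Rmin a b >= Rmin c e.
Proof.
  intros Hac Hbe; unfold Rmin.
  destruct (Rle_dec a b), (Rle_dec c e); lra.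
Qed.

Lemma Rmin_Rmin_ge_compat (a b c e f g : R) :
  a >= Rmin c e -> b >= Rmin f g -> Rmin a b >= Rmin (Rmin c f) (Rmin e g).
Proof.
  intros Ha Hb.
  replace (Rmin (Rmin c f) (Rmin e g)) with (Rmin (Rmin c e) (Rmin f g)).
  - now apply Rmin_ge_compat.
  - unfold Rmin; repeat destruct (Rle_dec _ _); lra.
Qed.

Lemma mu_beta_diag {X : Type} (beta : X -> R) (x : X) :
  mu_beta beta (x, x) = beta x.
Proof. unfold mu_beta, Rmin; simpl; now destruct (Rle_dec _ _). Qed.

Section StrongestFuzzyRelation.

Variables (X : Type) (op : X -> X -> X) (z : X) (d : X -> X) (beta : X -> R).

Lemma mu_beta_left_der_KU_ideal :
  fuzzy_left_der_KU_ideal op z d beta ->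
  fuzzy_left_der_KU_ideal (prod_op op) (z, z) (prod_map d) (mu_beta beta).
Proof.
  intros [Hz Hder]; split.
  - intros [a1 a2]; apply Rmin_ge_compat; apply Hz.
  - intros [a1 a2] [b1 b2] [c1 c2]; unfold mu_beta; simpl.
    apply Rmin_Rmin_ge_compat; apply Hder.
Qed.

Lemma left_der_KU_ideal_of_mu_beta :
  fuzzy_left_der_KU_ideal (prod_op op) (z, z) (prod_map d) (mu_beta beta) ->
  fuzzy_left_der_KU_ideal op z d beta.
Proof.
  intros [Hz Hder]; split.
  - intros a; specialize (Hz (a, a)).
    rewrite !mu_beta_diag in Hz; exact Hz.
  - intros a b c; specialize (Hder (a, a) (b, b) (c, c)).
    unfold prod_op, prod_map in Hder; simpl in Hder.
    rewrite !mu_beta_diag in Hder; exact Hder.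
Qed.

End StrongestFuzzyRelation.

Theorem theorem5p14 (X : Type) (op : X -> X -> X) (z : X) (d : X -> X)
  (beta : X -> R) :
  is_KU_algebra X op z ->
  fuzzy_set beta ->
  (fuzzy_left_der_KU_ideal op z d beta <->
   fuzzy_left_der_KU_ideal (prod_op op) (z, z) (prod_map d) (mu_beta beta)).
Proof.
  intros _ _; split.
  - apply mu_beta_left_der_KU_ideal.
  - apply left_der_KU_ideal_of_mu_beta.
Qed.
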